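(* Let $U:\mathbb{C}^*\to\mathbb{C}$ be a reasonable expansion with unique restrictions, between locally small categories, which has the expansion property; assume all morphisms in $\mathbb{C}$ are monomorphisms and $\mathbb{C}^*$ is directed. Let $A\in\mathrm{Ob}(\mathbb{C})$ be such that $\mathrm{Aut}(A)$ is finite. (a) $t^\sim_{\mathbb{C}}(A)$ is finite if and only if $U^{-1}(A)$ is finite and $t^\sim_{\mathbb{C}^*}(\mathcal{A})<\infty$ for all $\mathcal{A}\in U^{-1}(A)$, and in that case $$t^\sim_{\mathbb{C}}(A)=\sum_{\mathcal{A}\in U^{-1}(A)}\frac{|\mathrm{Aut}(\mathcal{A})|}{|\mathrm{Aut}(A)|}\cdot t^\sim_{\mathbb{C}^*}(\mathcal{A}).$$ (b) If $U^{-1}(A)$ is finite and $t^\sim_{\mathbb{C}^*}(\mathcal{A})<\infty$ for all $\mathcal{A}\in U^{-1}(A)$, and $\mathcal{A}_1,\dots,\mathcal{A}_n$ are representatives of the isomorphism classes (in $\mathbb{C}^*$) of objects in $U^{-1}(A)$, then $t^\sim_{\mathbb{C}}(A)=\sum_{i=1}^n t^\sim_{\mathbb{C}^*}(\mathcal{A}_i)$.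
   Context: Write $X\to Y$ if $\hom(X,Y)\ne\varnothing$; a category is directed if for all objects $A,B$ there is $C$ with $A\to C$, $B\to C$. An expansion of $\mathbb{C}$ is a category $\mathbb{C}^*$ with a functor $U:\mathbb{C}^*\to\mathbb{C}$ surjective on objects and injective on hom-sets; we regard $\hom_{\mathbb{C}^*}(\mathcal{A},\mathcal{B})\subseteq\hom_{\mathbb{C}}(U\mathcal{A},U\mathcal{B})$, and $U^{-1}(A)=\{\mathcal{A}:U(\mathcal{A})=A\}$. $U$ is reasonable if for every $e\in\hom(A,B)$ and $\mathcal{A}\in U^{-1}(A)$ there is $\mathcal{B}\in U^{-1}(B)$ with $e\in\hom(\mathcal{A},\mathcal{B})$; it has unique restrictions if for every $\mathcal{B}$ and $e\in\hom(A,U(\mathcal{B}))$ there is exactly one $\mathcal{A}\in U^{-1}(A)$ with $e\in\hom(\mathcal{A},\mathcal{B})$; it has the expansion property if for every $A$ there is $B$ with $\mathcal{A}\to\mathcal{B}$ for all $\mathcal{A}\in U^{-1}(A)$, $\mathcal{B}\in U^{-1}(B)$. In a category $\mathbb{D}$: for $f,f'\in\hom(A,B)$, $f\sim_A f'$ iff $f'=f\cdot\alpha$ for some $\alpha\in\mathrm{Aut}(A)$; $\binom{B}{A}=\hom(A,B)/{\sim_A}$, and $w\cdot(f/{\sim_A})=(w\cdot f)/{\sim_A}$. $C\overset{\sim}{\to}(B)^A_{k,t}$ means that for every $\chi:\binom{C}{A}\to\{0,\dots,k-1\}$ there is $w\in\hom(B,C)$ with $|\chi(w\cdot\binom{B}{A})|\le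 t$; $t^\sim_{\mathbb{D}}(A)$ is the least positive $n$ such that for all $k\ge2$ and all $B$ there is $C$ with $C\overset{\sim}{\to}(B)^A_{k,n}$, and $\infty$ otherwise. *)

From Stdlib Require Import List Arith ClassicalEpsilon.
Import ListNotations.


Record Cat := {
  ob : Type;
  hom : ob -> ob -> Type;
  comp : forall X Y Z : ob, hom Y Z -> hom X Y -> hom X Z;
  idm : forall X : ob, hom X X;
  comp_assoc : forall X Y Z W (h : hom Z W) (g : hom Y Z) (f : hom X Y),
      comp X Z W h (comp X Y Z g f) = comp X Y W (comp Y Z W h g) f;
  comp_id_l : forall X Y (f : hom X Y), comp X Y Y (idm Y) f = f;
  comp_id_r : forall X Y (f : hom X Y), comp X X Y f (idm X) = f
}.
Arguments hom {c} _ _.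
Arguments comp {c X Y Z} _ _.
Arguments idm {c} _.

Definition arrow {C : Cat} (X Y : ob C) : Prop := inhabited (hom X Y).

Definition directed (C : Cat) : Prop :=
  forall X Y : ob C, exists Z : ob C, arrow X Z /\ arrow Y Z.

Definition all_mono (C : Cat) : Prop :=
  forall (X Y Z : ob C) (h : hom Y Z) (f g : hom X Y), comp h f = comp h g -> f = g.

Definition is_aut {C : Cat} (X : ob C) (a : hom X X) : Prop :=
  exists b : hom X X, comp a b = idm X /\ comp b a = idm X.

Definition isomorphic {C : Cat} (X Y : ob C) : Prop :=
  exists (f : hom X Y) (g : hom Y X), comp g f = idm X /\ comp f g = idm Y.

Definition finite_pred {T : Type} (P : T -> Prop) : Prop :=
  exists l : list T, forall x, P x <-> In x l.

Definition enumerates {T : Type} (l : list T) (P : T -> Prop) : Prop :=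
  NoDup l /\ (forall x, P x <-> In x l).

Definition has_card {T : Type} (P : T -> Prop) (n : nat) : Prop :=
  exists l : list T, enumerates l P /\ length l = n.

(* |P| for a finite P (an arbitrary value, 0, for infinite P) *)
Definition card {T : Type} (P : T -> Prop) : nat :=
  epsilon (inhabits 0) (fun n => has_card P n).

(* A coloring chi : binom(C,A) -> {0,..,k-1}, represented as a map on hom(A,C)
   constant on ~_A classes (f ~_A f . alpha, alpha in Aut(A)). *)
Definition coloring {D : Cat} (A C : ob D) (k : nat) (chi : hom A C -> nat) : Prop :=
  (forall f, chi f < k) /\
  (forall (f : hom A C) (alpha : hom A A), is_aut A alpha -> chi (comp f alpha) = chi f).

Definition erdos_rado_arrow {D : Cat} (C B A : ob D) (k t : nat) : Prop :=
  forall chi : hom A C -> nat, coloring A C k chi ->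
    exists (w : hom B C) (vals : list nat),
      length vals <= t /\ forall f : hom A B, In (chi (comp w f)) vals.

Definition ramsey_prop {D : Cat} (A : ob D) (n : nat) : Prop :=
  forall k, 2 <= k -> forall B : ob D, exists C : ob D, erdos_rado_arrow C B A k n.

(* t^~_D(A): Some n = the least positive n with ramsey_prop; None = infinity *)
Definition tdeg_spec {D : Cat} (A : ob D) (o : option nat) : Prop :=
  match o with
  | Some n => 0 < n /\ ramsey_prop A n /\ forall m, 0 < m -> ramsey_prop A m -> n <= m
  | None => ~ exists n, 0 < n /\ ramsey_prop A n
  end.

Definition tdeg {D : Cat} (A : ob D) : option nat :=
  epsilon (inhabits None) (fun o => tdeg_spec A o).

Definition tval (o : option nat) : nat := match o with Some n => n | None => 0 end.

Record Expansion (C : Cat) := {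
  ecat : Cat;
  Uob : ob ecat -> ob C;
  Uhom : forall X Y : ob ecat, hom X Y -> hom (Uob X) (Uob Y);
  U_id : forall X, Uhom X X (idm X) = idm (Uob X);
  U_comp : forall X Y Z (g : hom Y Z) (f : hom X Y),
      Uhom X Z (comp g f) = comp (Uhom Y Z g) (Uhom X Y f);
  U_surj : forall A : ob C, exists X, Uob X = A;
  U_inj : forall X Y (f g : hom X Y), Uhom X Y f = Uhom X Y g -> f = g
}.
Arguments ecat {C} _.
Arguments Uob {C} _ _.
Arguments Uhom {C} _ {X Y} _.

Section Exp.
Context {C : Cat} (E : Expansion C).

(* e in hom_{C*}(X',Y') : e (a C-morphism X -> Y) is the image of some f : X' -> Y'
   (heterogeneous equality, since Uob X' and X are only propositionally equal) *)
Definition lifts_to (X' Y' : ob (ecat E)) {X Y : ob C} (e : hom X Y) : Prop :=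
  exists f : hom X' Y',
    existT (fun p : ob C * ob C => hom (fst p) (snd p)) (Uob E X', Uob E Y') (Uhom E f)
    = existT (fun p : ob C * ob C => hom (fst p) (snd p)) (X, Y) e.

Definition reasonable : Prop :=
  forall (A B : ob C) (e : hom A B) (X' : ob (ecat E)), Uob E X' = A ->
    exists Y' : ob (ecat E), Uob E Y' = B /\ lifts_to X' Y' e.

Definition unique_restrictions : Prop :=
  forall (Y' : ob (ecat E)) (A : ob C) (e : hom A (Uob E Y')),
    exists X' : ob (ecat E),
      (Uob E X' = A /\ lifts_to X' Y' e) /\
      forall X'', Uob E X'' = A /\ lifts_to X'' Y' e -> X'' = X'.

Definition expansion_property : Prop :=
  forall A : ob C, exists B : ob C,
    forall X' Y' : ob (ecat E), Uob E X' = A -> Uob E Y' = B -> arrow X' Y'.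

End Exp.

(* Colourings of hom(A, C) that need not be Aut(A)-invariant define the embedding
   Ramsey degree t(A); recording the colours along an Aut(A)-orbit in one colour, and
   conversely refining a colour by the position inside the orbit, shows
   t(A) = |Aut(A)| t~(A) when all morphisms are mono.  By unique restrictions, a
   colouring of hom(A, U D), for D an object of the expansion, is the same as a family
   of colourings of the hom(X, D) with U X = A.  Stacking Ramsey objects for the
   finitely many X gives t(A) <= sum_X t(X); conversely the expansion property and
   directedness merge bad colourings for the X into one bad colouring for A, so
   t(A) >= sum_X t(X), and t(A) is infinite when the fibre is infinite or some t(X) is.
   Finally the automorphisms of A lifting to X -> R, for R isomorphic to X, are in
   bijection with Aut(X), and each automorphism of A lifts into R from exactly one X;
   so the isomorphism class of R has |Aut(A)| / |Aut(R)| members, which turns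
   |Aut(A)| t~(A) = sum_X |Aut(X)| t~(X) into both formulas. *)

From Stdlib Require Import List Arith QArith.
From Stdlib Require Import Lia Classical ClassicalEpsilon FunctionalExtensionality
  PropExtensionality ProofIrrelevance ListDec.
Import ListNotations.

Local Open Scope nat_scope.

Definition asbool (P : Prop) : bool := if excluded_middle_informative P then true else false.

Lemma asboolP (P : Prop) : asbool P = true <-> P.
Proof. unfold asbool; destruct excluded_middle_informative; split; auto; discriminate. Qed.

Section FiniteSets.
Context {T : Type}.

Lemma has_card_unique (P : T -> Prop) n m : has_card P n -> has_card P m -> n = m.
Proof.
  intros [l [[Hl Pl] <-]] [l' [[Hl' Pl'] <-]].
  apply Nat.le_antisymm; apply NoDup_incl_length; auto; intros x Hx.
  - apply Pl', Pl, Hx.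
  - apply Pl, Pl', Hx.
Qed.

Lemma card_eq (P : T -> Prop) n : has_card P n -> card P = n.
Proof.
  intros H. apply (has_card_unique P); auto.
  unfold card. apply epsilon_spec. eauto.
Qed.

Lemma card_enumerates (P : T -> Prop) l : enumerates l P -> card P = length l.
Proof. intros H. apply card_eq. exists l. auto. Qed.

Lemma finite_pred_enumerates (P : T -> Prop) : finite_pred P -> exists l, enumerates l P.
Proof.
  intros [l Hl]. destruct (uniquify (fun x y => classic (x = y)) l) as [l' [Hnd Hincl]].
  exists (filter (fun x => asbool (P x)) l').
  split; [now apply NoDup_filter|]. intros x. rewrite filter_In, asboolP.
  split; [|tauto]. intros Px. split; auto. apply Hincl, Hl, Px.
Qed.

Lemma not_finite_pred_large (P : T -> Prop) : ~ finite_pred P ->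
  forall n, exists l, NoDup l /\ length l = n /\ forall x, In x l -> P x.
Proof.
  intros HP n. induction n as [|n [l [Hnd [Hlen Hl]]]].
  - exists []. repeat split; [constructor|]. intros _ [].
  - assert (exists x, P x /\ ~ In x l) as [x [Px Hx]].
    { apply NNPP; intros Hc. apply HP. exists l. intros x; split; auto.
      intros Px. apply NNPP; intros Hx. apply Hc; eauto. }
    exists (x :: l). repeat split; [constructor; auto|simpl; lia|].
    intros y [<-|Hy]; auto.
Qed.

Lemma has_card_bij {T'} (P : T -> Prop) (Q : T' -> Prop) (phi : T -> T') (x0 : T) :
  (forall x, P x -> Q (phi x)) -> (forall x y, P x -> P y -> phi x = phi y -> x = y) ->
  (forall y, Q y -> exists x, P x /\ phi x = y) -> forall m, has_card Q m -> has_card P m.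
Proof.
  intros Hmap Hinj Hsurj m [lQ [[Hnd HQ] <-]].
  set (inv := fun y => epsilon (inhabits x0) (fun x => P x /\ phi x = y)).
  assert (Hinv : forall y, Q y -> P (inv y) /\ phi (inv y) = y).
  { intros y Hy. apply (epsilon_spec (inhabits x0) (fun x => P x /\ phi x = y)). auto. }
  exists (map inv lQ). split; [split|apply length_map].
  - apply NoDup_map_NoDup_ForallPairs; auto. intros y y' Hy Hy' Heq.
    apply HQ in Hy, Hy'. now rewrite <- (proj2 (Hinv y Hy)), <- (proj2 (Hinv y' Hy')), Heq.
  - intros x. split.
    + intros Px. apply in_map_iff. exists (phi x). split; [|apply HQ; auto].
      apply Hinj; auto; apply Hinv, Hmap; auto.
    + intros Hx. apply in_map_iff in Hx as [y [<- Hy]]. apply Hinv, HQ, Hy.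
Qed.

Lemma list_index_exists (l : list T) : exists idx : T -> nat,
  (forall x, In x l -> idx x < length l) /\
  (forall x y, In x l -> In y l -> idx x = idx y -> x = y).
Proof.
  set (idx := fun x => epsilon (inhabits 0) (fun i => nth_error l i = Some x)).
  assert (idxP : forall x, In x l -> nth_error l (idx x) = Some x).
  { intros x Hx. apply epsilon_spec, In_nth_error, Hx. }
  exists idx. split.
  - intros x Hx. apply nth_error_Some. rewrite idxP; [discriminate|auto].
  - intros x y Hx Hy Hxy. apply idxP in Hx, Hy. congruence.
Qed.

End FiniteSets.

Lemma list_sum_map_ext {T} (l : list T) f g : (forall x, In x l -> f x = g x) ->
  list_sum (map f l) = list_sum (map g l).
Proof. intros H. now rewrite (map_ext_in f g l H). Qed.

Lemma list_sum_map_le {T} (l : list T) f g : (forall x, In x l -> f x <= g x) ->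
  list_sum (map f l) <= list_sum (map g l).
Proof.
  induction l as [|x l IH]; simpl; intros H; auto.
  specialize (H x (or_introl eq_refl)) as Hx.
  assert (list_sum (map f l) <= list_sum (map g l)) by (apply IH; auto). lia.
Qed.

Lemma list_sum_map_1 {T} (l : list T) : list_sum (map (fun _ => 1) l) = length l.
Proof. induction l; simpl; auto. Qed.

Lemma list_sum_map_mulr {T} (l : list T) (f : T -> nat) c :
  list_sum (map (fun x => f x * c) l) = list_sum (map f l) * c.
Proof. induction l; simpl; lia. Qed.

Lemma list_sum_map_swap {T U} (l : list T) (m : list U) (f : T -> U -> nat) :
  list_sum (map (fun x => list_sum (map (f x) m)) l) =
  list_sum (map (fun y => list_sum (map (fun x => f x y) l)) m).
Proof.
  revert m. induction l as [|x l IH]; intros m; simpl.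
  - induction m; simpl; auto.
  - rewrite IH. clear IH. induction m as [|y m IH]; simpl; auto. lia.
Qed.

Lemma length_filter_sum {T} (l : list T) (p : T -> bool) :
  length (filter p l) = list_sum (map (fun x => if p x then 1 else 0) l).
Proof. induction l as [|x l IH]; simpl; auto. destruct (p x); simpl; lia. Qed.

Lemma list_sum_length_filter_swap {T U} (l : list T) (m : list U) (p : T -> U -> bool) :
  list_sum (map (fun x => length (filter (p x) m)) l) =
  list_sum (map (fun y => length (filter (fun x => p x y) l)) m).
Proof.
  rewrite (list_sum_map_ext l _ (fun x => list_sum (map (fun y => if p x y then 1 else 0) m)))
    by (intros x _; apply (length_filter_sum m (p x))).
  rewrite (list_sum_map_ext m _ (fun y => list_sum (map (fun x => if p x y then 1 else 0) l)))
    by (intros y _; apply (length_filter_sum l (fun x => p x y))).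
  apply (list_sum_map_swap l m (fun x y => if p x y then 1 else 0)).
Qed.

Lemma length_filter_le_1 {T} (l : list T) (p : T -> bool) : NoDup l ->
  (forall x y, In x l -> In y l -> p x = true -> p y = true -> x = y) ->
  length (filter p l) <= 1.
Proof.
  intros Hnd Huniq. destruct (filter p l) as [|x [|y r]] eqn:F; simpl; [lia|lia|].
  assert (Hx : In x (filter p l)) by (rewrite F; simpl; auto).
  assert (Hy : In y (filter p l)) by (rewrite F; simpl; auto).
  assert (Hxy : NoDup (filter p l)) by now apply NoDup_filter.
  apply filter_In in Hx as [Hx px], Hy as [Hy py].
  rewrite F in Hxy. inversion Hxy as [|? ? Hnot]; subst.
  exfalso. apply Hnot. rewrite (Huniq x y); simpl; auto.
Qed.

Lemma list_sum_length_filter_keys_le {T} (l : list T) (vals : list nat) (key : T -> nat)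
  (q : nat -> nat) : NoDup l -> (forall x y, In x l -> In y l -> key x = key y -> x = y) ->
  list_sum (map (fun x => length (filter (fun v => Nat.eqb (q v) (key x)) vals)) l) <= length vals.
Proof.
  intros Hnd Hinj. rewrite (list_sum_length_filter_swap l vals (fun x v => Nat.eqb (q v) (key x))).
  rewrite <- list_sum_map_1. apply list_sum_map_le. intros v _. apply length_filter_le_1; auto.
  intros x y Hx Hy Ex Ey. apply Nat.eqb_eq in Ex, Ey. apply Hinj; congruence.
Qed.

Lemma length_filter_eq_1 {T} (l : list T) (p : T -> bool) x0 : NoDup l -> In x0 l -> p x0 = true ->
  (forall y, In y l -> p y = true -> y = x0) -> length (filter p l) = 1.
Proof.
  intros Hnd Hx0 px0 Huniq. apply Nat.le_antisymm.
  - apply length_filter_le_1; auto. intros x y Hx Hy px py. now rewrite (Huniq x), (Huniq y).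
  - assert (In x0 (filter p l)) as Hin by (apply filter_In; auto).
    destruct (filter p l); [destruct Hin|simpl; lia].
Qed.

Lemma list_sum_seq_single (f : nat -> nat) n i0 : i0 < n ->
  (forall i, i < n -> i <> i0 -> f i = 0) -> list_sum (map f (seq 0 n)) = f i0.
Proof.
  intros Hi0 Hzero.
  replace n with (i0 + S (n - S i0)) by lia.
  rewrite seq_app, map_app, list_sum_app. simpl.
  rewrite (list_sum_map_ext _ f (fun _ => 0)), (list_sum_map_ext (seq (S i0) _) f (fun _ => 0)).
  - assert (Hsum0 : forall l : list nat, list_sum (map (fun _ => 0) l) = 0)
      by (induction l; simpl; auto).
    rewrite !Hsum0. lia.
  - intros i Hi. apply in_seq in Hi. apply Hzero; lia.
  - intros i Hi. apply in_seq in Hi. apply Hzero; lia.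
Qed.

Section Categories.
Context (D : Cat).

Definition hom_erdos_rado_arrow (Cc B A : ob D) (k t : nat) : Prop :=
  forall chi : hom A Cc -> nat, (forall f, chi f < k) ->
    exists (w : hom B Cc) (vals : list nat),
      length vals <= t /\ forall f : hom A B, In (chi (comp w f)) vals.

Definition hom_ramsey_prop (A : ob D) (t : nat) : Prop :=
  forall k, 2 <= k -> forall B : ob D, exists Cc : ob D, hom_erdos_rado_arrow Cc B A k t.

Definition least_hom_ramsey (A : ob D) (s : nat) : Prop :=
  hom_ramsey_prop A s /\ forall t, hom_ramsey_prop A t -> s <= t.

Lemma comp_cancel {X Y Z : ob D} (g : hom Y X) (f : hom X Y) (x : hom Z X) :
  comp g f = idm X -> comp g (comp f x) = x.
Proof. intros H. now rewrite comp_assoc, H, comp_id_l. Qed.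

Lemma is_aut_idm (A : ob D) : is_aut A (idm A).
Proof. exists (idm A). now rewrite comp_id_l. Qed.

Lemma is_aut_comp (A : ob D) a b : is_aut A a -> is_aut A b -> is_aut A (comp a b).
Proof.
  intros [a' [Ha1 Ha2]] [b' [Hb1 Hb2]]. exists (comp b' a'). split.
  - now rewrite <- comp_assoc, (comp_cancel b b').
  - now rewrite <- comp_assoc, (comp_cancel a' a).
Qed.

Lemma is_aut_inv (A : ob D) a : is_aut A a ->
  exists b, is_aut A b /\ comp a b = idm A /\ comp b a = idm A.
Proof. intros [b [H1 H2]]. exists b. split; auto. exists a; auto. Qed.

Lemma not_ramsey_prop_0 (A : ob D) : ~ ramsey_prop A 0.
Proof.
  intros H. destruct (H 2 (le_n 2) A) as [Cc HC].
  destruct (HC (fun _ => 0)) as [w [[|v vals] [Hl Hv]]]; [split; auto| |simpl in Hl; lia].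
  exact (Hv (idm A)).
Qed.

Lemma not_hom_ramsey_prop_0 (A : ob D) : ~ hom_ramsey_prop A 0.
Proof.
  intros H. destruct (H 2 (le_n 2) A) as [Cc HC].
  destruct (HC (fun _ => 0)) as [w [[|v vals] [Hl Hv]]]; [auto| |simpl in Hl; lia].
  exact (Hv (idm A)).
Qed.

Lemma tdeg_specP (A : ob D) : tdeg_spec A (tdeg A).
Proof.
  unfold tdeg. apply epsilon_spec.
  destruct (classic (exists n, 0 < n /\ ramsey_prop A n)) as [Hex|Hno].
  - destruct (dec_inh_nat_subset_has_unique_least_element _
      (fun n => classic (0 < n /\ ramsey_prop A n)) Hex) as [n [[[Hn Rn] Hmin] _]].
    exists (Some n). repeat split; auto.
  - exists None. exact Hno.
Qed.

Lemma tdeg_spec_tdeg (A : ob D) o : tdeg_spec A o -> tdeg A = o.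
Proof.
  intros H. pose proof (tdeg_specP A) as H'.
  destruct (tdeg A) as [n|], o as [m|]; simpl in *.
  - f_equal. apply Nat.le_antisymm; [apply H'|apply H]; tauto.
  - exfalso; apply H; exists n; tauto.
  - exfalso; apply H'; exists m; tauto.
  - reflexivity.
Qed.

Lemma tdeg_SomeE (A : ob D) n : tdeg A = Some n ->
  0 < n /\ ramsey_prop A n /\ forall m, 0 < m -> ramsey_prop A m -> n <= m.
Proof. intros H. pose proof (tdeg_specP A) as H'. now rewrite H in H'. Qed.

Lemma tdeg_NoneE (A : ob D) : tdeg A = None -> forall n, ~ ramsey_prop A n.
Proof.
  intros H [|n] Rn; [exact (not_ramsey_prop_0 A Rn)|].
  pose proof (tdeg_specP A) as H'. rewrite H in H'. apply H'. exists (S n); split; auto; lia.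
Qed.

Lemma isomorphic_refl (X : ob D) : isomorphic X X.
Proof. exists (idm X), (idm X). now rewrite comp_id_l. Qed.

Lemma isomorphic_sym (X Y : ob D) : isomorphic X Y -> isomorphic Y X.
Proof. intros [f [g [H1 H2]]]. exists g, f. auto. Qed.

Lemma isomorphic_trans (X Y Z : ob D) : isomorphic X Y -> isomorphic Y Z -> isomorphic X Z.
Proof.
  intros [f [f' [H1 H2]]] [g [g' [H3 H4]]]. exists (comp g f), (comp f' g'). split.
  - now rewrite <- comp_assoc, (comp_cancel g' g).
  - now rewrite <- comp_assoc, (comp_cancel f f').
Qed.

Lemma ramsey_prop_iso (X Y : ob D) n : isomorphic X Y -> ramsey_prop X n -> ramsey_prop Y n.
Proof.
  intros [h [h' [H1 H2]]] R k Hk B. destruct (R k Hk B) as [Cc HC]. exists Cc.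
  intros chi [Hbound Hinv].
  destruct (HC (fun f => chi (comp f h'))) as [w [vals [Hl Hv]]].
  - split; [intros; apply Hbound|]. intros f alpha Ha.
    assert (Hconj : is_aut Y (comp h (comp alpha h'))).
    { destruct Ha as [b [Hb1 Hb2]]. exists (comp h (comp b h')). split;
        rewrite <- !comp_assoc, (comp_cancel h' h) by exact H1.
      - now rewrite (comp_cancel alpha b).
      - now rewrite (comp_cancel b alpha). }
    cbv beta. rewrite <- (Hinv (comp f h') _ Hconj). f_equal.
    now rewrite <- !comp_assoc, (comp_cancel h' h).
  - exists w, vals. split; auto. intros f.
    replace (comp w f) with (comp (comp w (comp f h)) h'); [apply Hv|].
    now rewrite <- !comp_assoc, H2, comp_id_r.
Qed.

Lemma tdeg_iso (X Y : ob D) : isomorphic X Y -> tdeg X = tdeg Y.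
Proof.
  intros Hiso. symmetry. apply tdeg_spec_tdeg. pose proof (tdeg_specP X) as HX.
  pose proof (isomorphic_sym _ _ Hiso) as Hiso'.
  destruct (tdeg X) as [n|]; simpl in *.
  - destruct HX as [Hn [Rn Hmin]]. repeat split; [auto|eapply ramsey_prop_iso; eauto|].
    intros m Hm Rm. apply Hmin; auto. eapply ramsey_prop_iso; eauto.
  - intros [n [Hn Rn]]. apply HX. exists n. split; auto. eapply ramsey_prop_iso; eauto.
Qed.

End Categories.

Definition from_digits (k : nat) (l : list nat) : nat := fold_right (fun x acc => x + k * acc) 0 l.
Definition digit (k j v : nat) : nat := (v / k ^ j) mod k.

Lemma digit_from_digits k l : 0 < k -> (forall x, In x l -> x < k) ->
  forall j, j < length l -> digit k j (from_digits k l) = nth j l 0.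
Proof.
  intros Hk. induction l as [|x l IH]; intros Hl j Hj; simpl in *; [lia|].
  unfold digit in *. destruct j as [|j]; simpl nth.
  - rewrite Nat.pow_0_r, Nat.div_1_r, Nat.mul_comm, Nat.Div0.mod_add, Nat.mod_small; auto.
  - rewrite Nat.pow_succ_r', <- Nat.Div0.div_div, Nat.mul_comm, Nat.div_add by lia.
    rewrite (Nat.div_small x k) by auto. apply IH; [intros; apply Hl|]; auto; lia.
Qed.

Lemma from_digits_lt k l : 0 < k -> (forall x, In x l -> x < k) -> from_digits k l < k ^ length l.
Proof.
  intros Hk. induction l as [|x l IH]; intros Hl; simpl; [lia|].
  assert (from_digits k l < k ^ length l) by (apply IH; intros; apply Hl; simpl; auto).
  assert (x < k) by (apply Hl; simpl; auto). nia.
Qed.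

Section Blocks.
Variable a : nat.
Hypothesis a_pos : 0 < a.

Definition full_blocks (vals : list nat) : list nat :=
  filter (fun c => forallb (fun j => asbool (In (c * a + j) vals)) (seq 0 a))
    (nodup Nat.eq_dec (map (fun v => v / a) vals)).

Lemma block_div c x : c * a <= x < c * a + a -> x / a = c.
Proof. intros H. symmetry. apply (Nat.div_unique x a c (x - c * a)); lia. Qed.

Lemma in_full_blocks vals c : (forall j, j < a -> In (c * a + j) vals) -> In c (full_blocks vals).
Proof.
  intros Hc. apply filter_In. split.
  - apply nodup_In, in_map_iff. exists (c * a + 0). split; [apply block_div; lia|apply Hc; auto].
  - apply forallb_forall. intros j Hj. apply in_seq in Hj. rewrite asboolP. apply Hc. lia.
Qed.

Lemma full_blocks_length vals : a * length (full_blocks vals) <= length vals.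
Proof.
  set (S := full_blocks vals).
  assert (Hlen : length (flat_map (fun c => seq (c * a) a) S) = a * length S).
  { rewrite (flat_map_constant_length (c := a)); [lia|]. intros; apply length_seq. }
  rewrite <- Hlen. apply NoDup_incl_length.
  - assert (HS : NoDup S) by apply NoDup_filter, NoDup_nodup. clear Hlen.
    induction S as [|c S IH]; simpl; [constructor|]. inversion HS; subst.
    apply NoDup_app; auto using seq_NoDup.
    intros x Hx Hx'. apply in_seq in Hx. apply in_flat_map in Hx' as [c' [Hc' Hx']].
    apply in_seq in Hx'. assert (c = c') as <-; [|auto].
    now rewrite <- (block_div c x), <- (block_div c' x).
  - intros x Hx. apply in_flat_map in Hx as [c [Hc Hx]]. apply in_seq in Hx.
    apply filter_In in Hc as [_ Hc]. rewrite forallb_forall in Hc.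
    specialize (Hc (x - c * a) ltac:(apply in_seq; lia)). rewrite asboolP in Hc.
    now replace x with (c * a + (x - c * a)) by lia.
Qed.

End Blocks.

Section AutOrbits.
Context (D : Cat) (A : ob D) (auts : list (hom A A))
  (auts_nodup : NoDup auts) (auts_spec : forall al, is_aut A al <-> In al auts).

Let a := length auts.

Lemma auts_length_pos : 0 < a.
Proof.
  pose proof (proj1 (auts_spec _) (is_aut_idm D A)) as H.
  unfold a. destruct auts; simpl in *; [destruct H|lia].
Qed.

Definition orbit {Cc : ob D} (f : hom A Cc) : hom A Cc -> Prop :=
  fun g => exists al, is_aut A al /\ g = comp f al.

Definition orbit_rep {Cc : ob D} (f : hom A Cc) : hom A Cc := epsilon (inhabits f) (orbit f).

Lemma orbit_repP {Cc} (f : hom A Cc) : orbit f (orbit_rep f).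
Proof.
  apply (epsilon_spec (inhabits f) (orbit f)). exists f, (idm A).
  split; [apply is_aut_idm|]. now rewrite comp_id_r.
Qed.

Lemma orbit_comp_aut {Cc} (f : hom A Cc) b : is_aut A b -> orbit (comp f b) = orbit f.
Proof.
  intros Hb. destruct (is_aut_inv D A b Hb) as [b' [Hb' [H1 H2]]].
  apply functional_extensionality; intros g. apply propositional_extensionality. split.
  - intros [al [Hal ->]]. exists (comp b al). split; [now apply is_aut_comp|].
    now rewrite comp_assoc.
  - intros [al [Hal ->]]. exists (comp b' al). split; [now apply is_aut_comp|].
    now rewrite <- comp_assoc, (comp_cancel D b b').
Qed.

Lemma orbit_rep_comp_aut {Cc} (f : hom A Cc) b : is_aut A b -> orbit_rep (comp f b) = orbit_rep f.
Proof.
  intros Hb. unfold orbit_rep. rewrite (orbit_comp_aut f b Hb). f_equal. apply proof_irrelevance.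
Qed.

Lemma orbit_rep_decomp {Cc} (f : hom A Cc) :
  exists j, j < a /\ f = comp (orbit_rep f) (nth j auts (idm A)).
Proof.
  destruct (orbit_repP f) as [b [Hb Hr]]. destruct (is_aut_inv D A b Hb) as [g [Hg [H1 H2]]].
  destruct (In_nth auts g (idm A)) as [j [Hj Hn]]; [apply auts_spec; auto|].
  exists j. split; auto. now rewrite Hn, Hr, <- comp_assoc, H1, comp_id_r.
Qed.

Definition orbit_pos {Cc} (f : hom A Cc) : nat :=
  epsilon (inhabits 0) (fun j => j < a /\ f = comp (orbit_rep f) (nth j auts (idm A))).

Lemma orbit_posP {Cc} (f : hom A Cc) :
  orbit_pos f < a /\ f = comp (orbit_rep f) (nth (orbit_pos f) auts (idm A)).
Proof.
  apply (epsilon_spec (inhabits 0) (fun j => j < a /\ f = comp (orbit_rep f) (nth j auts (idm A)))).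
  apply orbit_rep_decomp.
Qed.

Lemma orbit_pos_unique {Cc} (Hmono : all_mono D) (f : hom A Cc) j :
  j < a -> f = comp (orbit_rep f) (nth j auts (idm A)) -> orbit_pos f = j.
Proof.
  intros Hj Hf. destruct (orbit_posP f) as [Hp Hf'].
  apply (proj1 (NoDup_nth auts (idm A)) auts_nodup); auto.
  apply (Hmono _ _ _ (orbit_rep f)). now rewrite <- Hf, <- Hf'.
Qed.

(* A colouring of [hom A Cc] in [k] colours becomes an invariant colouring in [k ^ a]
   colours by recording, in base [k], the colours along the orbit. *)
Lemma hom_ramsey_of_ramsey n : ramsey_prop A n -> hom_ramsey_prop D A (a * n).
Proof.
  intros R k Hk B. pose proof auts_length_pos as Ha.
  assert (HK : 2 <= k ^ a) by (pose proof (Nat.pow_le_mono_r k 1 a); simpl in *; lia).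
  destruct (R _ HK B) as [Cc HC]. exists Cc. intros chi Hchi.
  set (orbit_colours := fun f : hom A Cc => map (fun al => chi (comp (orbit_rep f) al)) auts).
  assert (Hcol : forall f x, In x (orbit_colours f) -> x < k).
  { intros f x Hx. apply in_map_iff in Hx as [y [<- _]]. auto. }
  destruct (HC (fun f => from_digits k (orbit_colours f))) as [w [vals [Hl Hv]]].
  - split.
    + intros f. replace a with (length (orbit_colours f)) by apply length_map.
      apply from_digits_lt; eauto; lia.
    + intros f al Hal. unfold orbit_colours. now rewrite orbit_rep_comp_aut.
  - exists w, (flat_map (fun v => map (fun j => digit k j v) (seq 0 a)) vals). split.
    + rewrite (flat_map_constant_length (c := a)) by (intros; now rewrite length_map, length_seq).
      nia.
    + intros f. apply in_flat_map. eexists; split; [apply Hv|]. apply in_map_iff.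
      destruct (orbit_rep_decomp (comp w f)) as [j [Hj Hr]].
      exists j. split; [|apply in_seq; lia].
      rewrite digit_from_digits; [|lia|apply Hcol|unfold orbit_colours; now rewrite length_map].
      unfold orbit_colours. rewrite nth_indep with (d' := chi (comp (orbit_rep (comp w f)) (idm A)))
        by (rewrite length_map; auto).
      rewrite (map_nth (fun al => chi (comp (orbit_rep (comp w f)) al))). now rewrite <- Hr.
Qed.

(* Conversely an invariant colouring [chi'] refines to the colouring
   [chi' f * a + orbit_pos f]; a set of values meeting a whole orbit then contains the
   full block of [a] values of the orbit's colour. *)
Lemma ramsey_of_hom_ramsey (Hmono : all_mono D) t : hom_ramsey_prop D A t -> ramsey_prop A (t / a).
Proof.
  intros H k Hk B. pose proof auts_length_pos as Ha.
  destruct (H (k * a) ltac:(nia) B) as [Cc HC]. exists Cc. intros chi' [Hbound Hinv].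
  destruct (HC (fun f => chi' f * a + orbit_pos f)) as [w [vals [Hl Hv]]].
  { intros f. pose proof (Hbound f). pose proof (proj1 (orbit_posP f)). nia. }
  exists w, (full_blocks a vals). split.
  - apply Nat.div_le_lower_bound; [lia|].
    pose proof (full_blocks_length a Ha vals). lia.
  - intros f. apply in_full_blocks; auto. intros j Hj.
    destruct (orbit_repP (comp w f)) as [g [Hg Hr]].
    assert (Hnj : is_aut A (nth j auts (idm A))) by (apply auts_spec, nth_In; auto).
    set (beta := comp g (nth j auts (idm A))).
    assert (Hbeta : is_aut A beta) by now apply is_aut_comp.
    specialize (Hv (comp f beta)). cbv beta in Hv.
    rewrite comp_assoc, Hinv, (orbit_pos_unique Hmono _ j) in Hv; auto.
    rewrite orbit_rep_comp_aut, Hr by auto. unfold beta. now rewrite <- !comp_assoc.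
Qed.

Lemma tdeg_Some_least_hom_ramsey (Hmono : all_mono D) m :
  tdeg A = Some m -> least_hom_ramsey D A (a * m).
Proof.
  intros Ht. destruct (tdeg_SomeE D A m Ht) as [Hm0 [Rm Hmin]].
  split; [now apply hom_ramsey_of_ramsey|].
  intros t Ht'. pose proof (ramsey_of_hom_ramsey Hmono t Ht') as R. pose proof auts_length_pos.
  assert (m <= t / a).
  { apply Hmin; auto. destruct (t / a); [destruct (not_ramsey_prop_0 D A R)|lia]. }
  pose proof (Nat.Div0.mul_div_le t a). nia.
Qed.

Lemma tdeg_None_not_hom_ramsey (Hmono : all_mono D) :
  tdeg A = None -> forall t, ~ hom_ramsey_prop D A t.
Proof. intros H t Ht. exact (tdeg_NoneE D A H _ (ramsey_of_hom_ramsey Hmono t Ht)). Qed.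

Lemma least_hom_ramsey_tdeg (Hmono : all_mono D) s :
  least_hom_ramsey D A s -> exists n, tdeg A = Some n /\ a * n = s.
Proof.
  intros [Hs Hmin]. destruct (tdeg A) as [n|] eqn:E.
  - exists n. split; auto. pose proof (tdeg_Some_least_hom_ramsey Hmono n E) as [Hn Hnmin].
    specialize (Hmin _ Hn). specialize (Hnmin _ Hs). lia.
  - destruct (tdeg_None_not_hom_ramsey Hmono E s Hs).
Qed.

End AutOrbits.

Section Casts.
Context {C : Cat}.

Definition cast_hom {Z Z' W W' : ob C} (p : Z = Z') (q : W = W') (f : hom Z W) : hom Z' W' :=
  match p in _ = Z1 return hom Z1 W' with
  | eq_refl => match q in _ = W1 return hom Z W1 with eq_refl => f end
  end.

Lemma cast_hom_comp {Z Z' W W' V V' : ob C} (p : Z = Z') (q : W = W') (r : V = V')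
  (f : hom Z W) (g : hom W V) : cast_hom p r (comp g f) = comp (cast_hom q r g) (cast_hom p q f).
Proof. now destruct p, q, r. Qed.

Lemma cast_hom_idm {Z Z' : ob C} (p : Z = Z') : cast_hom p p (idm Z) = idm Z'.
Proof. now destruct p. Qed.

Lemma cast_hom_inj {Z Z' W W' : ob C} (p : Z = Z') (q : W = W') f g :
  cast_hom p q f = cast_hom p q g -> f = g.
Proof. now destruct p, q. Qed.

Lemma cast_hom_trans {Z Z' Z'' W W' W'' : ob C} (p : Z = Z') (p' : Z' = Z'') (q : W = W')
  (q' : W' = W'') f : cast_hom p' q' (cast_hom p q f) = cast_hom (eq_trans p p') (eq_trans q q') f.
Proof. now destruct p, q, p', q'. Qed.

Lemma cast_hom_idm_sym (Z W : ob C) (q : Z = W) :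
  cast_hom q eq_refl (idm Z) = cast_hom eq_refl (eq_sym q) (idm W).
Proof. now destruct q. Qed.

Lemma cast_hom_sym_r (Z W W' : ob C) (q : W' = W) (e : hom Z W) :
  cast_hom eq_refl q (cast_hom eq_refl (eq_sym q) e) = e.
Proof. now destruct q. Qed.

Lemma existT_hom_cast (Z1 W1 Z2 W2 : ob C) (f1 : hom Z1 W1) (f2 : hom Z2 W2) :
  existT (fun p : ob C * ob C => hom (fst p) (snd p)) (Z1, W1) f1 =
  existT (fun p : ob C * ob C => hom (fst p) (snd p)) (Z2, W2) f2 ->
  exists (p : Z1 = Z2) (q : W1 = W2), cast_hom p q f1 = f2.
Proof.
  intros H. pose proof (f_equal (@projT1 _ _) H) as H1. simpl in H1. injection H1 as <- <-.
  apply inj_pair2 in H as <-. now exists eq_refl, eq_refl.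
Qed.

End Casts.

Section Expansion.
Context (C : Cat) (E : Expansion C).
Notation CE := (ecat E).
Notation U := (Uob E).
Notation Uh := (Uhom E).

Lemma lifts_toE (X Y : ob CE) (Z W : ob C) (e : hom Z W) :
  lifts_to E X Y e <-> exists (p : U X = Z) (q : U Y = W) (g : hom X Y), cast_hom p q (Uh g) = e.
Proof.
  split.
  - intros [g H]. destruct (existT_hom_cast _ _ _ _ _ _ H) as [p [q Hpq]]. eauto.
  - intros [p [q [g H]]]. subst Z W e. now exists g.
Qed.

Lemma lifts_to_cast (X Y : ob CE) (Z W : ob C) (p : U X = Z) (q : U Y = W) (g : hom X Y) :
  lifts_to E X Y (cast_hom p q (Uh g)).
Proof. apply lifts_toE. eauto. Qed.

Lemma lifts_to_cast_hom (X Y : ob CE) (Z W Z' W' : ob C) (p : Z = Z') (q : W = W') (e : hom Z W) :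
  lifts_to E X Y e -> lifts_to E X Y (cast_hom p q e).
Proof.
  intros H. apply lifts_toE in H as [p0 [q0 [g <-]]]. rewrite cast_hom_trans. apply lifts_to_cast.
Qed.

Lemma Uhom_cast_comp {X Y Z : ob CE} {Z0 Y0 X0 : ob C} (p : U X = X0) (q : U Y = Y0)
  (r : U Z = Z0) (f : hom X Y) (g : hom Y Z) :
  cast_hom p r (Uh (comp g f)) = comp (cast_hom q r (Uh g)) (cast_hom p q (Uh f)).
Proof. rewrite U_comp. apply cast_hom_comp. Qed.

Lemma ecat_all_mono : all_mono C -> all_mono CE.
Proof.
  intros Hmono X Y Z h f g H. apply U_inj. apply (Hmono _ _ _ (Uh h)). now rewrite <- !U_comp, H.
Qed.

Section Fibre.
Variable A : ob C.
Hypothesis Hreas : reasonable E.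
Hypothesis Huniq : unique_restrictions E.
Hypothesis Hexp : expansion_property E.
Hypothesis Hdir : directed CE.

Lemma hom_ramsey_stack (N : ob CE -> nat) (l : list (ob CE)) :
  (forall X, In X l -> U X = A /\ hom_ramsey_prop CE X (N X)) ->
  forall k, 2 <= k -> forall Bs : ob CE, exists Cs : ob CE,
    forall chi : hom A (U Cs) -> nat, (forall f, chi f < k) ->
      exists (w : hom Bs Cs) (vals : list nat), length vals <= list_sum (map N l) /\
        forall X (p : U X = A) (g : hom X Bs), In X l ->
          In (chi (cast_hom p eq_refl (Uh (comp w g)))) vals.
Proof.
  induction l as [|X l IH]; intros Hl k Hk Bs.
  - exists Bs. intros chi _. exists (idm Bs), []. split; simpl; [auto|intros _ _ _ []].
  - destruct (IH (fun Y HY => Hl Y (or_intror HY)) k Hk Bs) as [Cs' HC'].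
    destruct (Hl X (or_introl eq_refl)) as [pX HX].
    destruct (HX k Hk Cs') as [Cs HCs]. exists Cs. intros chi Hchi.
    destruct (HCs (fun g => chi (cast_hom pX eq_refl (Uh g)))) as [w1 [vals1 [Hl1 Hv1]]]; [auto|].
    destruct (HC' (fun f => chi (comp (Uh w1) f))) as [w2 [vals2 [Hl2 Hv2]]]; [auto|].
    exists (comp w1 w2), (vals1 ++ vals2). split; [rewrite length_app; simpl; lia|].
    intros Y p g [<-|HY]; apply in_or_app.
    + left. rewrite (proof_irrelevance _ p pX), <- comp_assoc. apply Hv1.
    + right. rewrite <- comp_assoc, (Uhom_cast_comp p eq_refl eq_refl). now apply Hv2.
Qed.

(* By unique restrictions every [f : A -> U Bs] is the image of a morphism out of the fibre. *)
Lemma hom_ramsey_fibre_sum (N : ob CE -> nat) (l : list (ob CE)) :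
  (forall X, U X = A -> In X l) -> (forall X, In X l -> U X = A /\ hom_ramsey_prop CE X (N X)) ->
  hom_ramsey_prop C A (list_sum (map N l)).
Proof.
  intros Hcov Hl k Hk B. destruct (U_surj C E B) as [Bs <-].
  destruct (hom_ramsey_stack N l Hl k Hk Bs) as [Cs HC]. exists (U Cs). intros chi Hchi.
  destruct (HC chi Hchi) as [w [vals [Hlen Hv]]]. exists (Uh w), vals. split; auto.
  intros f. destruct (Huniq Bs A f) as [X [[pX HX] _]].
  apply lifts_toE in HX as [p [q [g <-]]]. rewrite (proof_irrelevance _ q eq_refl).
  change (Uh w) with (cast_hom (eq_refl (U Bs)) (eq_refl (U Cs)) (Uh w)).
  rewrite <- cast_hom_comp, <- U_comp. apply Hv. now apply Hcov.
Qed.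

Definition bad_coloring (X : ob CE) (m k : nat) (Bs Cs : ob CE) (chi : hom X Cs -> nat) : Prop :=
  (forall g, chi g < k) /\
  forall (w : hom Bs Cs) vals, (forall g : hom X Bs, In (chi (comp w g)) vals) -> m < length vals.

Definition ramsey_failure (X : ob CE) (m k : nat) (Bs : ob CE) : Prop :=
  forall Cs : ob CE, exists chi, bad_coloring X m k Bs Cs chi.

Lemma not_hom_ramsey_failure X m :
  ~ hom_ramsey_prop CE X m -> exists k, 2 <= k /\ exists Bs, ramsey_failure X m k Bs.
Proof.
  intros H. apply NNPP; intros Hne. apply H. intros k Hk Bs. apply NNPP; intros Hn.
  apply Hne. exists k; split; auto. exists Bs. intros Cs. apply NNPP; intros Hn2.
  apply Hn. exists Cs. intros chi Hchi. apply NNPP; intros Hn3. apply Hn2. exists chi.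
  split; auto. intros w vals Hv. apply Nat.nle_gt. intros Hlen. apply Hn3. eauto.
Qed.

Lemma ramsey_failure_mono X m k k' Bs Bs' :
  ramsey_failure X m k Bs -> k <= k' -> arrow Bs Bs' -> ramsey_failure X m k' Bs'.
Proof.
  intros H Hk [u] Cs. destruct (H Cs) as [chi [Hb Hv]]. exists chi.
  split; [intros g; specialize (Hb g); lia|].
  intros w vals Hw. apply (Hv (comp w u)). intros g. rewrite <- comp_assoc. apply Hw.
Qed.

Lemma ramsey_failures_common (M : ob CE -> nat) (l : list (ob CE)) (Bs0 : ob CE) :
  (forall X, In X l -> exists k, 2 <= k /\ exists Bs, ramsey_failure X (M X) k Bs) ->
  exists K, 2 <= K /\ exists Bs, forall X, In X l -> ramsey_failure X (M X) K Bs.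
Proof.
  induction l as [|X l IH]; intros H.
  - exists 2. split; auto. exists Bs0. intros _ [].
  - destruct IH as [K' [HK' [Bs' HB']]]; [intros; apply H; simpl; auto|].
    destruct (H X (or_introl eq_refl)) as [k [Hk [BX HBX]]].
    destruct (Hdir Bs' BX) as [Z [H1 H2]]. exists (K' + k). split; [lia|]. exists Z.
    intros Y [<-|HY]; eapply ramsey_failure_mono; eauto; lia.
Qed.

(* Well defined since, by unique restrictions, [f] determines the [X] it comes from;
   the residue [idx X] of a colour modulo [r] remembers that [X]. *)
Lemma glue_colorings (Cs : ob CE) (l : list (ob CE))
  (K r : nat) (idx : ob CE -> nat) (chiX : forall X : ob CE, hom X Cs -> nat) :
  0 < K -> 0 < r -> (forall X, In X l -> idx X < r) ->
  (forall X, In X l -> forall g, chiX X g < K) ->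
  exists chi : hom A (U Cs) -> nat, (forall f, chi f < K * r) /\
    forall X (p : U X = A) (g : hom X Cs), In X l ->
      chi (cast_hom p eq_refl (Uh g)) = chiX X g * r + idx X.
Proof.
  intros HK Hr Hidx HchiX.
  set (glued := fun (f : hom A (U Cs)) (v : nat) => exists X (p : U X = A) (g : hom X Cs),
          In X l /\ cast_hom p eq_refl (Uh g) = f /\ v = chiX X g * r + idx X).
  set (glued_or_0 := fun f v => glued f v \/ (~ (exists v', glued f v') /\ v = 0)).
  set (chi := fun f => epsilon (inhabits 0) (glued_or_0 f)).
  assert (chiP : forall f, glued f (chi f) \/ (~ (exists v', glued f v') /\ chi f = 0)).
  { intros f. apply (epsilon_spec (inhabits 0) (glued_or_0 f)). unfold glued_or_0.
    destruct (classic (exists v', glued f v')) as [[v Hv]|Hn]; eauto. }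
  exists chi. split.
  - intros f. destruct (chiP f) as [[X [p [g [HX [_ ->]]]]]|[_ ->]]; [|nia].
    specialize (HchiX X HX g). specialize (Hidx X HX). nia.
  - intros X p g HX.
    destruct (chiP (cast_hom p eq_refl (Uh g))) as [[X' [p' [g' [HX' [Heq ->]]]]]|[Hn _]].
    + destruct (Huniq Cs A (cast_hom p eq_refl (Uh g))) as [X'' [_ Hu]].
      assert (X' = X) as <-.
      { rewrite (Hu X), (Hu X'); auto; split; auto using lifts_to_cast.
        rewrite <- Heq; apply lifts_to_cast. }
      rewrite (proof_irrelevance _ p' p) in Heq. now apply cast_hom_inj, U_inj in Heq as ->.
    + exfalso. apply Hn. exists (chiX X g * r + idx X), X, p, g. auto.
Qed.

Lemma hom_ramsey_fibre_lower (M : ob CE -> nat) (l : list (ob CE)) :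
  NoDup l -> (forall X, In X l -> U X = A /\ ~ hom_ramsey_prop CE X (M X)) ->
  forall t, hom_ramsey_prop C A t -> list_sum (map (fun X => S (M X)) l) <= t.
Proof.
  intros Hnd Hl t Ht. destruct l as [|X0 l0] eqn:El; [simpl; lia|]. rewrite <- El in *.
  set (r := length l). assert (Hr : 0 < r) by (subst r; rewrite El; simpl; lia).
  destruct (ramsey_failures_common M l X0) as [K [HK [Bs HBs]]].
  { intros X HX. apply not_hom_ramsey_failure, Hl, HX. }
  destruct (Hexp (U Bs)) as [B' HB'].
  destruct (Ht (K * r) ltac:(nia) B') as [Cc HCc].
  destruct (U_surj C E Cc) as [Cs <-].
  set (chiX := fun X => epsilon (inhabits (fun _ : hom X Cs => 0)) (bad_coloring X (M X) K Bs Cs)).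
  assert (chiXP : forall X, In X l -> bad_coloring X (M X) K Bs Cs (chiX X)).
  { intros X HX. apply epsilon_spec, (HBs X HX Cs). }
  destruct (list_index_exists l) as [idx [idx_lt idx_inj]].
  destruct (glue_colorings Cs l K r idx chiX ltac:(lia) Hr idx_lt
              (fun X HX => proj1 (chiXP X HX))) as [chi [Hchi Hglue]].
  destruct (HCc chi Hchi) as [w [vals [Hlen Hv]]].
  destruct (Huniq Cs B' w) as [Bs'' [[_ Hw] _]].
  apply lifts_toE in Hw as [q [q' [ws Hws]]]. subst B'.
  rewrite (proof_irrelevance _ q' eq_refl) in Hws. simpl in Hws. subst w.
  destruct (HB' Bs Bs'' eq_refl eq_refl) as [u].
  assert (Hbad : forall X, In X l ->
            M X < length (filter (fun v => Nat.eqb (v mod r) (idx X)) vals)).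
  { intros X HX. destruct (Hl X HX) as [pX _].
    rewrite <- (length_map (fun v => v / r)).
    apply ((proj2 (chiXP X HX)) (comp ws u)). intros g.
    specialize (Hv (cast_hom pX eq_refl (Uh (comp u g)))).
    change (Uh ws) with (cast_hom (eq_refl (U Bs'')) (eq_refl (U Cs)) (Uh ws)) in Hv.
    rewrite <- (Uhom_cast_comp pX eq_refl eq_refl), Hglue, comp_assoc in Hv by auto.
    apply in_map_iff. eexists; split; [|apply filter_In; split; [exact Hv|]].
    - rewrite Nat.div_add_l, Nat.div_small; auto; lia.
    - apply Nat.eqb_eq. rewrite Nat.add_comm, Nat.Div0.mod_add, Nat.mod_small; auto. }
  eapply Nat.le_trans; [|exact Hlen].
  eapply Nat.le_trans; [|apply (list_sum_length_filter_keys_le l vals idx (fun v => v mod r))].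
  - apply list_sum_map_le. intros X HX. apply Hbad, HX.
  - exact Hnd.
  - exact idx_inj.
Qed.

Lemma lift_of_aut_is_iso (X R : ob CE) (Z : ob C) (p : U X = Z) (q : U R = Z) (g : hom X R)
  (al : hom Z Z) : is_aut Z al -> cast_hom p q (Uh g) = al ->
  exists g' : hom R X, comp g' g = idm X /\ comp g g' = idm R.
Proof.
  intros [al' [Ha1 Ha2]] Hg. destruct q.
  destruct (Hreas (U R) (U R) al' R eq_refl) as [Y [_ HY]].
  apply lifts_toE in HY as [p1 [q1 [g1 Hg1]]]. rewrite (proof_irrelevance _ p1 eq_refl) in Hg1.
  assert (Hg1g : cast_hom p q1 (Uh (comp g1 g)) = idm (U R)).
  { now rewrite (Uhom_cast_comp p eq_refl q1), Hg1, Hg. }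
  (* [X] and [Y] are both restrictions of [Y] along the identity of [U R], hence equal. *)
  set (e0 := cast_hom eq_refl (eq_sym q1) (idm (U R))).
  assert (HXY : lifts_to E X Y e0).
  { apply lifts_toE. exists p, eq_refl, (comp g1 g). unfold e0.
    rewrite <- Hg1g, cast_hom_trans. f_equal; apply proof_irrelevance. }
  assert (HYY : lifts_to E Y Y e0).
  { apply lifts_toE. exists q1, eq_refl, (idm Y). unfold e0. rewrite U_id. apply cast_hom_idm_sym. }
  destruct (Huniq Y (U R) e0) as [X'' [_ Hu]].
  assert (X = Y) as <- by (rewrite (Hu X), (Hu Y); auto).
  rewrite (proof_irrelevance _ q1 p) in *. exists g1. split; apply U_inj; rewrite U_id.
  - apply (cast_hom_inj p p). now rewrite cast_hom_idm.
  - change (cast_hom eq_refl eq_refl (Uh (comp g g1)) = idm (U R)).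
    now rewrite (Uhom_cast_comp eq_refl p eq_refl), Hg1, Hg.
Qed.

Lemma lifts_aut_isomorphic (X R : ob CE) (Z : ob C) (al : hom Z Z) :
  is_aut Z al -> lifts_to E X R al -> isomorphic X R.
Proof.
  intros Ha Hl. apply lifts_toE in Hl as [p [q [g Hg]]].
  destruct (lift_of_aut_is_iso X R Z p q g al Ha Hg) as [g' [H1 H2]]. now exists g, g'.
Qed.

Section Liftings.
Variable auts : list (hom A A).
Hypothesis auts_nodup : NoDup auts.
Hypothesis auts_spec : forall al, is_aut A al <-> In al auts.

Definition lifting_count (X R : ob CE) : nat :=
  length (filter (fun al => asbool (lifts_to E X R al)) auts).

(* Orbit-stabiliser: [b |-> U (h b)] identifies [Aut X] with the automorphisms of [A]
   lifting to [X -> R], for any isomorphism [h : X -> R]. *)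
Lemma has_card_aut_lifting_count (X R : ob CE) (pX : U X = A) (pR : U R = A) :
  isomorphic X R -> has_card (is_aut X) (lifting_count X R).
Proof.
  intros [h [h' [H1 H2]]].
  apply (has_card_bij (is_aut X) (fun al => is_aut A al /\ lifts_to E X R al)
           (fun b => cast_hom pX pR (Uh (comp h b))) (idm X)).
  - intros b [b' [Hb1 Hb2]]. split; [|apply lifts_to_cast].
    exists (cast_hom pR pX (Uh (comp b' h'))). split.
    + rewrite <- (Uhom_cast_comp pR pX pR), <- !comp_assoc.
      now rewrite (comp_cancel _ b b'), H2, U_id, cast_hom_idm.
    + rewrite <- (Uhom_cast_comp pX pR pX), <- !comp_assoc.
      now rewrite (comp_cancel _ h' h), Hb2, U_id, cast_hom_idm.
  - intros b1 b2 _ _ Hb. apply cast_hom_inj, U_inj in Hb.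
    now rewrite <- (comp_id_l _ _ _ b1), <- (comp_id_l _ _ _ b2), <- H1, <- !comp_assoc, Hb.
  - intros al [Ha Hl]. apply lifts_toE in Hl as [p' [q' [g Hg]]].
    rewrite (proof_irrelevance _ p' pX), (proof_irrelevance _ q' pR) in Hg.
    destruct (lift_of_aut_is_iso X R A pX pR g al Ha Hg) as [g' [G1 G2]].
    exists (comp h' g). split.
    + exists (comp g' h). split; rewrite <- !comp_assoc.
      * now rewrite (comp_cancel _ g g').
      * now rewrite (comp_cancel _ h h').
    + now rewrite <- Hg, (comp_cancel _ h h').
  - exists (filter (fun al => asbool (lifts_to E X R al)) auts). split; [split|reflexivity].
    + now apply NoDup_filter.
    + intros al. split.
      * intros [Ha Hl]. apply filter_In. split; [now apply auts_spec|now rewrite asboolP].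
      * intros Hal. apply filter_In in Hal as [Hal Hl].
        split; [now apply auts_spec|now rewrite asboolP in Hl].
Qed.

Lemma lifting_count_not_isomorphic (X R : ob CE) : ~ isomorphic X R -> lifting_count X R = 0.
Proof.
  intros Hn. unfold lifting_count. destruct (filter _ auts) as [|al r] eqn:F; auto. exfalso.
  assert (Hin : In al (filter (fun al => asbool (lifts_to E X R al)) auts))
    by (rewrite F; simpl; auto).
  apply filter_In in Hin as [Hin Hl]. rewrite asboolP in Hl.
  apply Hn, (lifts_aut_isomorphic X R A al); auto. now apply auts_spec.
Qed.

(* By unique restrictions every automorphism of [A] lifts into [R] from exactly one [X]. *)
Lemma lifting_count_fibre_sum (l : list (ob CE)) (R : ob CE) (pR : U R = A) :
  NoDup l -> (forall X, U X = A -> In X l) ->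
  list_sum (map (fun X => lifting_count X R) l) = length auts.
Proof.
  intros Hnd Hl. unfold lifting_count.
  rewrite (list_sum_length_filter_swap l auts (fun X al => asbool (lifts_to E X R al))).
  rewrite <- (list_sum_map_1 auts). apply list_sum_map_ext. intros al _.
  destruct (Huniq R A (cast_hom eq_refl (eq_sym pR) al)) as [X0 [[pX0 HX0] Hu]].
  apply (length_filter_eq_1 _ _ X0); auto.
  - rewrite asboolP. apply (lifts_to_cast_hom _ _ _ _ _ _ eq_refl pR) in HX0.
    now rewrite cast_hom_sym_r in HX0.
  - intros Y _ HY. rewrite asboolP in HY. apply Hu. split.
    + now apply lifts_toE in HY as [p [_ _]].
    + now apply lifts_to_cast_hom.
Qed.

End Liftings.
End Fibre.
End Expansion.

Lemma least_hom_ramsey_pos (D : Cat) (X : ob D) s : least_hom_ramsey D X s -> 0 < s.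
Proof. intros [Hs _]. destruct s; [destruct (not_hom_ramsey_prop_0 D X Hs)|lia]. Qed.

Lemma inject_nat_sum_ratio {T} (l : list T) (f g : T -> nat) (a n : nat) : a <> 0 ->
  a * n = list_sum (map (fun x => f x * g x) l) ->
  (inject_Z (Z.of_nat n) ==
   fold_right Qplus 0 (map (fun x => inject_Z (Z.of_nat (f x)) / inject_Z (Z.of_nat a) *
                                      inject_Z (Z.of_nat (g x))) l))%Q.
Proof.
  intros Ha Hn. assert (Hq : ~ (inject_Z (Z.of_nat a) == 0)%Q).
  { change 0%Q with (inject_Z 0). rewrite inject_Z_injective. lia. }
  assert (Hsum : (fold_right Qplus 0 (map (fun x => inject_Z (Z.of_nat (f x)) /
                    inject_Z (Z.of_nat a) * inject_Z (Z.of_nat (g x))) l) ==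
                  inject_Z (Z.of_nat (list_sum (map (fun x => (f x * g x)%nat) l))) /
                  inject_Z (Z.of_nat a))%Q).
  { clear Hn. induction l as [|x l IH]; simpl.
    - field; auto.
    - rewrite IH, Znat.Nat2Z.inj_add, inject_Z_plus, Znat.Nat2Z.inj_mul, inject_Z_mult.
      field; auto. }
  rewrite Hsum, <- Hn, Znat.Nat2Z.inj_mul, inject_Z_mult. field; auto.
Qed.

Section Degrees.
Context (C : Cat) (E : Expansion C).
Notation CE := (ecat E).
Notation U := (Uob E).
Hypothesis Hreas : reasonable E.
Hypothesis Huniq : unique_restrictions E.
Hypothesis Hexp : expansion_property E.
Hypothesis Hmono : all_mono C.
Hypothesis Hdir : directed CE.
Variable A : ob C.
Variable auts : list (hom A A).
Hypothesis auts_nodup : NoDup auts.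
Hypothesis auts_spec : forall al, is_aut A al <-> In al auts.

Let a := length auts.

Lemma enumerates_aut_fibre (X : ob CE) : U X = A ->
  exists lX, enumerates lX (is_aut X) /\ length lX = card (is_aut X).
Proof.
  intros pX. destruct (has_card_aut_lifting_count C E A Hreas Huniq auts auts_nodup auts_spec
                         X X pX pX (isomorphic_refl _ X)) as [lX [HlX Hlen]].
  exists lX. split; auto. symmetry. now apply card_enumerates.
Qed.

Lemma tdeg_Some_least_hom_ramsey_fibre (X : ob CE) m : U X = A -> tdeg X = Some m ->
  least_hom_ramsey CE X (card (is_aut X) * m).
Proof.
  intros pX HX. destruct (enumerates_aut_fibre X pX) as [lX [[Hnd Hspec] <-]].
  apply tdeg_Some_least_hom_ramsey; auto. now apply ecat_all_mono.
Qed.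

Lemma tdeg_None_not_hom_ramsey_fibre (X : ob CE) : U X = A -> tdeg X = None ->
  forall t, ~ hom_ramsey_prop CE X t.
Proof.
  intros pX HX. destruct (enumerates_aut_fibre X pX) as [lX [[Hnd Hspec] _]].
  apply (tdeg_None_not_hom_ramsey _ X lX); auto. now apply ecat_all_mono.
Qed.

Lemma tdeg_fibre_sum (l : list (ob CE)) :
  enumerates l (fun X => U X = A) -> (forall X, U X = A -> tdeg X <> None) ->
  exists n, tdeg A = Some n /\ a * n = list_sum (map (fun X => card (is_aut X) * tval (tdeg X)) l).
Proof.
  intros [Hnd Hl] Hall. set (N := fun X => card (is_aut X) * tval (tdeg X)).
  assert (HN : forall X, In X l -> least_hom_ramsey CE X (N X)).
  { intros X HX. apply Hl in HX. unfold N.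
    destruct (tdeg X) as [m|] eqn:EX; [|now destruct (Hall X HX)].
    now apply tdeg_Some_least_hom_ramsey_fibre. }
  apply least_hom_ramsey_tdeg; auto. split.
  - apply hom_ramsey_fibre_sum; auto; [intros X HX; now apply Hl|].
    intros X HX. split; [now apply Hl|apply HN, HX].
  - intros t Ht. rewrite (list_sum_map_ext l N (fun X => S (N X - 1))).
    + apply (hom_ramsey_fibre_lower C E A Huniq Hexp Hdir (fun X => N X - 1) l); auto.
      intros X HX. split; [now apply Hl|]. intros HX'.
      pose proof (least_hom_ramsey_pos _ _ _ (HN X HX)). apply (proj2 (HN X HX)) in HX'. lia.
    + intros X HX. pose proof (least_hom_ramsey_pos _ _ _ (HN X HX)). lia.
Qed.

(* Otherwise [hom_ramsey_fibre_lower] exceeds [a * n], applied to [a * n + 1] objects of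
   an infinite fibre, or to a single [X] that fails every bound. *)
Lemma tdeg_fibre_finite : tdeg A <> None ->
  finite_pred (fun X : ob CE => U X = A) /\ forall X, U X = A -> tdeg X <> None.
Proof.
  intros HA. destruct (tdeg A) as [n|] eqn:EA; [|congruence].
  destruct (tdeg_Some_least_hom_ramsey C A auts auts_nodup auts_spec Hmono n EA) as [Hn _].
  fold a in Hn. split.
  - apply NNPP; intros Hinf.
    destruct (not_finite_pred_large _ Hinf (S (a * n))) as [L [HL [Hlen HLA]]].
    pose proof (hom_ramsey_fibre_lower C E A Huniq Hexp Hdir (fun _ => 0) L HL
                  (fun X HX => conj (HLA X HX) (not_hom_ramsey_prop_0 _ X)) _ Hn) as H.
    rewrite list_sum_map_1 in H. lia.
  - intros X HX HXn.
    assert (Hlow : list_sum (map (fun _ => S (a * n)) [X]) <= a * n).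
    { apply (hom_ramsey_fibre_lower C E A Huniq Hexp Hdir (fun _ => a * n) [X]); auto.
      - repeat constructor. intros [].
      - intros Y [<-|[]]. split; auto. now apply tdeg_None_not_hom_ramsey_fibre. }
    simpl in Hlow. lia.
Qed.

Lemma fibre_sum_by_classes (l : list (ob CE)) (n : nat) (rep : nat -> ob CE) :
  enumerates l (fun X => U X = A) ->
  (forall i, i < n -> U (rep i) = A) ->
  (forall i j, i < n -> j < n -> isomorphic (rep i) (rep j) -> i = j) ->
  (forall X, U X = A -> exists i, i < n /\ isomorphic X (rep i)) ->
  list_sum (map (fun X => card (is_aut X) * tval (tdeg X)) l) =
  list_sum (map (fun i => tval (tdeg (rep i))) (seq 0 n)) * a.
Proof.
  intros [Hnd Hl] Hrep Hinj Hcov.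
  set (count := lifting_count C E A auts).
  transitivity (list_sum (map (fun X => list_sum (map (fun i =>
                  count X (rep i) * tval (tdeg (rep i))) (seq 0 n))) l)).
  - apply list_sum_map_ext. intros X HX. apply Hl in HX. destruct (Hcov X HX) as [i0 [Hi0 Hiso]].
    rewrite (list_sum_seq_single _ n i0 Hi0).
    + rewrite (tdeg_iso _ _ _ Hiso). f_equal. apply card_eq, has_card_aut_lifting_count; auto.
    + intros i Hi Hne. unfold count. rewrite lifting_count_not_isomorphic; auto. intros Hiso'.
      apply Hne, Hinj; auto. eapply isomorphic_trans; [apply isomorphic_sym|]; eauto.
  - rewrite (list_sum_map_swap l (seq 0 n) (fun X i => count X (rep i) * tval (tdeg (rep i)))).
    rewrite <- list_sum_map_mulr. apply list_sum_map_ext. intros i Hi. apply in_seq in Hi.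
    rewrite list_sum_map_mulr. unfold count. rewrite lifting_count_fibre_sum; auto.
    + fold a. lia.
    + apply Hrep. lia.
    + intros X HX. now apply Hl.
Qed.

End Degrees.

Theorem corollary6p4 (C : Cat) (E : Expansion C)
  (Hreas : reasonable E) (Huniq : unique_restrictions E)
  (Hexp : expansion_property E)
  (Hmono : all_mono C) (Hdir : directed (ecat E))
  (A : ob C) (HautA : finite_pred (@is_aut C A)) :
  (* (a) *)
  ((tdeg A <> None <->
     (finite_pred (fun X : ob (ecat E) => Uob E X = A) /\
      forall X : ob (ecat E), Uob E X = A -> tdeg X <> None)) /\
   (tdeg A <> None ->
     forall l : list (ob (ecat E)),
       enumerates l (fun X => Uob E X = A) ->
       (inject_Z (Z.of_nat (tval (tdeg A))) ==
        fold_right Qplus 0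
          (map (fun X : ob (ecat E) =>
                  (inject_Z (Z.of_nat (card (@is_aut (ecat E) X))) /
                   inject_Z (Z.of_nat (card (@is_aut C A)))) *
                  inject_Z (Z.of_nat (tval (tdeg X)))) l))%Q)) /\
  (* (b) *)
  (finite_pred (fun X : ob (ecat E) => Uob E X = A) ->
   (forall X : ob (ecat E), Uob E X = A -> tdeg X <> None) ->
   forall (n : nat) (rep : nat -> ob (ecat E)),
     (forall i, (i < n)%nat -> Uob E (rep i) = A) ->
     (forall i j, (i < n)%nat -> (j < n)%nat -> isomorphic (rep i) (rep j) -> i = j) ->
     (forall X : ob (ecat E), Uob E X = A -> exists i, (i < n)%nat /\ isomorphic X (rep i)) ->
     tdeg A = Some (list_sum (map (fun i => tval (tdeg (rep i))) (seq 0 n)))).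
Proof.
  destruct (finite_pred_enumerates _ HautA) as [auts [Hnd Hauts]].
  pose proof (auts_length_pos C A auts Hnd Hauts) as Ha.
  pose proof (tdeg_fibre_sum C E Hreas Huniq Hexp Hmono Hdir A auts Hnd Hauts) as Hsum.
  pose proof (tdeg_fibre_finite C E Hreas Huniq Hexp Hmono Hdir A auts Hnd Hauts) as Hfinite.
  split; [split; [split; [exact Hfinite|]|]|].
  - intros [Hfin Hall]. destruct (finite_pred_enumerates _ Hfin) as [l Hl].
    destruct (Hsum l Hl Hall) as [n [-> _]]. discriminate.
  - intros HA l Hl. destruct (Hsum l Hl (proj2 (Hfinite HA))) as [n [-> Hn]].
    rewrite (card_enumerates _ auts) by now split. apply inject_nat_sum_ratio; [lia|exact Hn].
  - intros Hfin Hall n rep Hrep Hinj Hcov. destruct (finite_pred_enumerates _ Hfin) as [l Hl].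
    destruct (Hsum l Hl Hall) as [m [-> Hm]]. f_equal.
    rewrite (fibre_sum_by_classes C E Hreas Huniq A auts Hnd Hauts l n rep) in Hm; auto. nia.
Qed.
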